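(* Let $\mathbf{C}$ be a locally small category, $\Omega$ an object of $\mathbf{C}$, and $\Phi\colon \mathbf{C}^{\mathrm{op}}\to\mathbf{Pos}$ a functor such that every fibre $\Phi X$ has all meets and every reindexing map $f^*:=\Phi f$ preserves all meets; fix $d_\Omega\in\Phi\Omega$. Define $\alpha_X(S)=\bigwedge_{k\in S}k^*(d_\Omega)$ for $S\subseteq\mathbf{C}(X,\Omega)$ and $\gamma_X(d)=\{k\in\mathbf{C}(X,\Omega)\mid d\preceq k^*(d_\Omega)\}$ for $d\in\Phi X$. Then $\gamma$ is laxly natural: for every $f\colon X\to Y$ in $\mathbf{C}$, $\mathcal{P}(f^\bullet)\circ\gamma_Y\subseteq\gamma_X\circ f^*$ (pointwise inclusion). Moreover, if $\gamma$ is natural (i.e. $\mathcal{P}(f^\bullet)\circ\gamma_Y=\gamma_X\circ f^*$ for all $f$) and $\mathbf{C}$ has small products, then for every $S\subseteq\mathbf{C}(X,\Omega)$, $$\gamma_X(\alpha_X(S))=\mathcal{P}(\langle S\rangle^\bullet)\big(\gamma_{\Omega^S}(d_{\Omega^S})\big),\qquad\text{where } d_{\Omega^S}=\bigwedge_{k\in S}\pi_k^*(d_\Omega).$$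
   Context: For $f\colon X\to Y$, $f^\bullet\colon\mathbf{C}(Y,\Omega)\to\mathbf{C}(X,\Omega)$ is $g\mapsto g\circ f$ and $\mathcal{P}(f^\bullet)$ its direct image on subsets. For $S\subseteq\mathbf{C}(X,\Omega)$, $\Omega^S$ is the product of $S$-many copies of $\Omega$ with projections $\pi_k\colon\Omega^S\to\Omega$ ($k\in S$), and $\langle S\rangle\colon X\to\Omega^S$ is the unique morphism with $\pi_k\circ\langle S\rangle=k$ for all $k\in S$. *)

Set Implicit Arguments.

Record Cat := {
  Ob :> Type;
  Hom : Ob -> Ob -> Type;
  idm : forall X, Hom X X;
  comp : forall X Y Z, Hom Y Z -> Hom X Y -> Hom X Z;
  comp_assoc : forall X Y Z W (f : Hom X Y) (g : Hom Y Z) (h : Hom Z W),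
      comp h (comp g f) = comp (comp h g) f;
  comp_id_l : forall X Y (f : Hom X Y), comp (idm Y) f = f;
  comp_id_r : forall X Y (f : Hom X Y), comp f (idm X) = f
}.
Arguments idm {c} X.
Arguments comp {c X Y Z} g f.
Arguments Hom {c} X Y.

Definition subset {T : Type} (A B : T -> Prop) := forall x, A x -> B x.
Definition set_eq {T : Type} (A B : T -> Prop) := forall x, A x <-> B x.

(** A functor [Phi : C^op -> Pos] whose fibres have all meets (given by a
    meet operation [meet], a greatest lower bound of any subset) and whose
    reindexing maps [f^* = reind f] are monotone and preserve all meets. *)
Unset Implicit Arguments.
Record MeetFibration (C : Cat) := {
  fib : Ob C -> Type;
  le : forall X, fib X -> fib X -> Prop;
  le_refl : forall X (d : fib X), le X d d;
  le_trans : forall X (a b c : fib X), le X a b -> le X b c -> le X a c;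
  le_antisym : forall X (a b : fib X), le X a b -> le X b a -> a = b;
  reind : forall X Y, @Hom C X Y -> fib Y -> fib X;
  reind_mono : forall X Y (f : Hom X Y) (a b : fib Y), le _ a b -> le _ (reind _ _ f a) (reind _ _ f b);
  reind_id : forall X (d : fib X), reind _ _ (idm X) d = d;
  reind_comp : forall X Y Z (f : Hom X Y) (g : Hom Y Z) (d : fib Z),
      reind _ _ (comp g f) d = reind _ _ f (reind _ _ g d);
  meet : forall X, (fib X -> Prop) -> fib X;
  meet_lb : forall X (S : fib X -> Prop) d, S d -> le X (meet X S) d;
  meet_glb : forall X (S : fib X -> Prop) e, (forall d, S d -> le X e d) -> le X e (meet X S);
  reind_meet : forall X Y (f : Hom X Y) (S : fib Y -> Prop),
      reind _ _ f (meet Y S) = meet X (fun e => exists d, S d /\ e = reind _ _ f d)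
}.
Arguments le {C} m {X} a b.
Arguments reind {C} m {X Y} f d.
Arguments meet {C} m {X} S.
Arguments fib {C} m X.

Record Products (C : Cat) := {
  prod : forall (I : Type), (I -> Ob C) -> Ob C;
  proj : forall I (A : I -> Ob C) (i : I), Hom (prod I A) (A i);
  tuple : forall I (A : I -> Ob C) (X : Ob C), (forall i, Hom X (A i)) -> Hom X (prod I A);
  proj_tuple : forall I (A : I -> Ob C) X (fs : forall i, Hom X (A i)) i,
      comp (proj I A i) (tuple I A X fs) = fs i;
  tuple_unique : forall I (A : I -> Ob C) X (fs : forall i, Hom X (A i)) (h : Hom X (prod I A)),
      (forall i, comp (proj I A i) h = fs i) -> h = tuple I A X fs
}.
Arguments prod {C} p {I} A.
Arguments proj {C} p {I} A i.
Arguments tuple {C} p {I A X} fs.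

Set Implicit Arguments.
Section Galois.
Variables (C : Cat) (Phi : MeetFibration C) (Om : Ob C) (dOm : fib Phi Om).

Definition alpha {X : Ob C} (S : Hom X Om -> Prop) : fib Phi X :=
  meet Phi (fun e => exists k, S k /\ e = reind Phi k dOm).

Definition gamma {X : Ob C} (d : fib Phi X) : Hom X Om -> Prop :=
  fun k => le Phi d (reind Phi k dOm).

(** direct image P(f^bullet)(A) of A ⊆ C(Y,Ω) along g |-> g ∘ f *)
Definition pimg {X Y : Ob C} (f : Hom X Y) (A : Hom Y Om -> Prop) : Hom X Om -> Prop :=
  fun h => exists g, A g /\ h = comp g f.

Definition gamma_natural : Prop :=
  forall (X Y : Ob C) (f : Hom X Y) (d : fib Phi Y),
    set_eq (pimg f (gamma d)) (gamma (reind Phi f d)).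

Definition powOm (P : Products C) {X : Ob C} (S : Hom X Om -> Prop) : Ob C :=
  prod P (fun _ : {k : Hom X Om | S k} => Om).

Definition tupleS (P : Products C) {X : Ob C} (S : Hom X Om -> Prop) : Hom X (powOm P S) :=
  tuple P (fun k : {k : Hom X Om | S k} => proj1_sig k).

Definition dpow (P : Products C) {X : Ob C} (S : Hom X Om -> Prop) : fib Phi (powOm P S) :=
  meet Phi (fun e => exists k : {k : Hom X Om | S k},
               e = reind Phi (proj P (fun _ : {k : Hom X Om | S k} => Om) k) dOm).

End Galois.


(* Lax naturality is monotonicity of reindexing together with [(g f)^* = f^* g^*].
   For the second part, <S>^* sends d_{Omega^S} to alpha_X(S): reindexing preserves
   meets and sends each pi_k^*(d_Omega) to k^*(d_Omega), since pi_k <S> = k. Naturality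
   of gamma along <S> then turns gamma_X(alpha_X(S)) into the claimed direct image. *)

Section MeetFibrationFacts.
Variables (C : Cat) (Phi : MeetFibration C).

Lemma meet_set_eq (X : Ob C) (A B : fib Phi X -> Prop) :
  set_eq A B -> meet Phi A = meet Phi B.
Proof.
  intros AB; apply le_antisym; apply meet_glb; intros d Hd; apply meet_lb; apply AB; exact Hd.
Qed.

End MeetFibrationFacts.

Section Galois.
Variables (C : Cat) (Phi : MeetFibration C) (Om : Ob C) (dOm : fib Phi Om).

Lemma gamma_lax_natural (X Y : Ob C) (f : Hom X Y) (d : fib Phi Y) :
  subset (pimg C Om f (gamma Phi Om dOm d)) (gamma Phi Om dOm (reind Phi f d)).
Proof.
  intros h [g [Hg ->]]; unfold gamma in *.
  rewrite reind_comp; apply reind_mono; exact Hg.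
Qed.

Variables (P : Products C) (X : Ob C) (S : Hom X Om -> Prop).

Lemma proj_tupleS (k : {k : Hom X Om | S k}) :
  comp (proj P (fun _ : {k : Hom X Om | S k} => Om) k) (tupleS Om P S) = proj1_sig k.
Proof. exact (proj_tuple C P _ _ X (fun k : {k : Hom X Om | S k} => proj1_sig k) k). Qed.

Lemma reind_tupleS_dpow :
  reind Phi (tupleS Om P S) (dpow Phi Om dOm P S) = alpha Phi Om dOm S.
Proof.
  unfold dpow, alpha; rewrite reind_meet; apply meet_set_eq; intros e; split.
  - intros [d [[k ->] ->]].
    exists (proj1_sig k); split; [exact (proj2_sig k) |].
    rewrite <- reind_comp, proj_tupleS; reflexivity.
  - intros [k [Hk ->]].
    exists (reind Phi (proj P (fun _ : {k : Hom X Om | S k} => Om) (exist _ k Hk)) dOm).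
    split; [exists (exist _ k Hk); reflexivity |].
    rewrite <- reind_comp, proj_tupleS; reflexivity.
Qed.

End Galois.

Theorem lemma1 (C : Cat) (Phi : MeetFibration C) (Om : Ob C) (dOm : fib Phi Om) :
  (forall (X Y : Ob C) (f : Hom X Y) (d : fib Phi Y),
      subset (pimg C Om f (gamma Phi Om dOm d)) (gamma Phi Om dOm (reind Phi f d)))
  /\
  (gamma_natural Phi Om dOm ->
   forall (P : Products C) (X : Ob C) (S : Hom X Om -> Prop),
     set_eq (gamma Phi Om dOm (alpha Phi Om dOm S))
            (pimg C Om (tupleS Om P S) (gamma Phi Om dOm (dpow Phi Om dOm P S)))).
Proof.
  split.
  - exact (gamma_lax_natural C Phi Om dOm).
  - intros Hnat P X S.
    rewrite <- (reind_tupleS_dpow C Phi Om dOm P X S).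
    intros h; apply iff_sym, Hnat.
Qed.
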